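(* Let $n\ge 3$ and let $A=(a_{jk})$ be a real $n\times n$ matrix such that: (i) $A$ is symmetric; (ii) all off-diagonal entries of $A$ are non-positive; (iii) $A$ is irreducible, i.e. the simple graph on vertex set $\{1,\dots,n\}$ in which $j\neq k$ are adjacent if and only if $a_{jk}\neq 0$ is connected; (iv) $A\mathbf{1}=\mathbf{0}$, where $\mathbf{1}$ is the all-ones vector. Let $\mathbf{f}=(f_1,\dots,f_n)\in\mathbb{R}^n$ be arbitrary. For each $i\in\{1,\dots,n\}$ let $\mathbf{f}_i:=(f_1,\dots,f_{i-1},\,f_i-\mathbf{f}\cdot\mathbf{1},\,f_{i+1},\dots,f_n)$, and let $\mathbf{x}_i=(x_{i1},\dots,x_{in})$ be the unique solution of the linear system $A\mathbf{x}=\mathbf{f}_i$ satisfying $x_{ii}=0$. Then $$x_{12}+x_{23}+x_{31}=x_{21}+x_{32}+x_{13}.$$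
   Context: Under hypotheses (i)–(iv), $A$ is positive semidefinite of rank $n-1$ with kernel spanned by $\mathbf{1}$; since $\mathbf{f}_i\cdot\mathbf{1}=0$, the system $A\mathbf{x}=\mathbf{f}_i$ has a solution unique up to adding a multiple of $\mathbf{1}$, so the normalization $x_{ii}=0$ determines $\mathbf{x}_i$ uniquely. *)

From HB Require Import structures.
From mathcomp Require Import all_boot all_order all_algebra.
Set Implicit Arguments. Unset Strict Implicit. Unset Printing Implicit Defensive.
Import Order.TTheory GRing.Theory Num.Theory.
Local Open Scope ring_scope.

Definition mx_adj (R : ringType) (n : nat) (A : 'M[R]_n) : rel 'I_n :=
  fun j k => (j != k) && (A j k != 0).

Definition mx_irreducible (R : ringType) (n : nat) (A : 'M[R]_n) : Prop :=
  forall j k : 'I_n, connect (mx_adj A) j k.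

Definition ones (R : ringType) (n : nat) : 'cV[R]_n := const_mx 1.

Definition f_mod (R : ringType) (n : nat) (f : 'cV[R]_n) (i : 'I_n) : 'cV[R]_n :=
  \col_k (if k == i then f k 0 - \sum_(l < n) f l 0 else f k 0).

(* The indices 1, 2, 3 (0-based: 0, 1, 2) of 'I_n when 3 <= n. *)
Definition idx1 (n : nat) (hn : (3 <= n)%N) : 'I_n :=
  Ordinal (leq_trans (isT : (1 <= 3)%N) hn).
Definition idx2 (n : nat) (hn : (3 <= n)%N) : 'I_n :=
  Ordinal (leq_trans (isT : (2 <= 3)%N) hn).
Definition idx3 (n : nat) (hn : (3 <= n)%N) : 'I_n :=
  Ordinal hn.

From HB Require Import structures.
From mathcomp Require Import all_boot all_order all_algebra.
From mathcomp Require Import ring lra.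

Set Implicit Arguments.
Unset Strict Implicit.
Unset Printing Implicit Defensive.
Import Order.TTheory GRing.Theory Num.Theory.
Local Open Scope ring_scope.

(* Write S := f.1.  Since f_i = f - S e_i and A is symmetric, pairing the
   equations for x_i and x_j gives S (x_ij - x_ji) = x_i.f - x_j.f, whose
   cyclic sum over (1,2,3) vanishes; this settles S <> 0.  If S = 0 all the
   right-hand sides coincide, so x_i - x_j lies in ker A, which by the maximum
   principle for the irreducible matrix A consists of constant vectors;
   normalising by x_jj = 0 gives x_i - x_j = x_ij 1, hence
   x_ij + x_jk + x_ki = 0 and both cyclic sums vanish. *)

Lemma f_modE (R : nzRingType) n (f : 'cV[R]_n) i :
  f_mod f i = f - (\sum_l f l 0) *: delta_mx i 0.
Proof.
apply/matrixP => k j; rewrite ord1 !mxE eqxx andbT.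
by case: eqP => _; rewrite ?mulr1 ?mulr0 ?subr0.
Qed.

Lemma sym_bilinear_formC (R : comNzRingType) n (A : 'M[R]_n) (u v : 'cV[R]_n) :
  A^T = A -> u^T *m A *m v = v^T *m A *m u.
Proof.
move=> A_sym; rewrite [LHS]mx11_scalar -tr_scalar_mx -mx11_scalar.
by rewrite !trmx_mul trmxK A_sym mulmxA.
Qed.

Section LaplacianKernel.

Variables (R : realDomainType) (n : nat) (A : 'M[R]_n).
Hypothesis A_offdiag_le0 : forall j k : 'I_n, j != k -> A j k <= 0.
Hypothesis A_irreducible : mx_irreducible A.
Hypothesis A_ones : A *m ones R n = 0.

Lemma mulmx_rowsum0E (z : 'cV[R]_n) j :
  (A *m z) j 0 = \sum_k A j k * (z k 0 - z j 0).
Proof.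
have rowsum0 : \sum_k A j k = 0.
  have := congr1 (fun M : 'cV[R]_n => M j 0) A_ones; rewrite /= !mxE => rowsum.
  by rewrite -[RHS]rowsum; apply: eq_bigr => k _; rewrite mxE mulr1.
under eq_bigr do rewrite mulrBr.
by rewrite sumrB -mulr_suml rowsum0 mul0r subr0 mxE.
Qed.

Section KernelVector.

Variable z : 'cV[R]_n.
Hypothesis Az0 : A *m z = 0.

Lemma ker_argmax_adj u v :
  (forall k, z k 0 <= z u 0) -> mx_adj A u v -> z v 0 = z u 0.
Proof.
move=> u_max /andP[_ Auv_neq0].
have terms_ge0 k : 0 <= A u k * (z k 0 - z u 0).
  have [<-|neq_uk] := eqVneq u k; first by rewrite subrr mulr0.
  by rewrite mulr_le0 ?A_offdiag_le0 // subr_le0.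
have := congr1 (fun M : 'cV[R]_n => M u 0) Az0.
rewrite /= mulmx_rowsum0E mxE => /eqP; rewrite psumr_eq0 // => /allP.
move=> /(_ v (mem_index_enum v)) /=.
by rewrite mulf_eq0 (negbTE Auv_neq0) subr_eq0 => /eqP.
Qed.

Lemma ker_const j k : z j 0 = z k 0.
Proof.
have [m _ m_max] := @arg_maxP _ _ _ j xpredT (fun k => z k 0) isT.
suff z_max l : z l 0 = z m 0 by rewrite !z_max.
have /connectP[p adj_p ->] := A_irreducible m l.
elim: p m adj_p {m_max}(m_max^~ isT) => [|v p IHp] u //= /andP[adj_uv adj_p].
move=> u_max; have zv_max := ker_argmax_adj u_max adj_uv.
by rewrite -zv_max; apply: IHp => // w; rewrite zv_max; apply: u_max.
Qed.

End KernelVector.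

Variables (f : 'cV[R]_n) (x : 'I_n -> 'cV[R]_n).
Hypothesis x_sol : forall i, A *m x i = f_mod f i.
Hypothesis x_diag : forall i, x i i 0 = 0.

Lemma solutions_cocycle :
  \sum_l f l 0 = 0 -> forall i j k, x i j 0 + x j k 0 + x k i 0 = 0.
Proof.
move=> f_sum0.
have x_diff i j l : x i l 0 - x j l 0 = x i j 0.
  have Axij0 : A *m (x i - x j) = 0.
    by rewrite mulmxBr !x_sol !f_modE f_sum0 !scale0r subr0 subrr.
  by have := ker_const Axij0 l j; rewrite !mxE x_diag subr0.
move=> i j k; rewrite -(x_diff i j i) -(x_diff j k i) x_diag.
by rewrite sub0r addrA addrNK addNr.
Qed.

End LaplacianKernel.

Section ModifiedSystems.

Variables (R : comNzRingType) (n : nat) (A : 'M[R]_n) (f : 'cV[R]_n).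
Variable x : 'I_n -> 'cV[R]_n.
Hypothesis A_sym : A^T = A.
Hypothesis x_sol : forall i, A *m x i = f_mod f i.

Lemma solution_pairing i j :
  ((x j)^T *m A *m x i) 0 0 = ((x j)^T *m f) 0 0 - (\sum_l f l 0) * x j i 0.
Proof.
by rewrite -mulmxA x_sol f_modE mulmxBr -scalemxAr -colE !mxE.
Qed.

Lemma solution_skew i j :
  (\sum_l f l 0) * (x i j 0 - x j i 0) =
  ((x i)^T *m f) 0 0 - ((x j)^T *m f) 0 0.
Proof.
have := solution_pairing i j; rewrite sym_bilinear_formC // solution_pairing.
move/eqP; rewrite -subr_eq0 => /eqP pairing_eq.
apply/eqP; rewrite -subr_eq0 -oppr_eq0; apply/eqP.
by rewrite -[RHS]pairing_eq; ring.
Qed.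

End ModifiedSystems.

Theorem mainTheorem1 (R : realFieldType) (n : nat) (hn : (3 <= n)%N)
  (A : 'M[R]_n)
  (hsym : A^T = A)
  (hoff : forall j k : 'I_n, j != k -> A j k <= 0)
  (hirr : mx_irreducible A)
  (hker : A *m ones R n = 0)
  (f : 'cV[R]_n)
  (x : 'I_n -> 'cV[R]_n)
  (hx : forall i : 'I_n, A *m x i = f_mod f i)
  (hxii : forall i : 'I_n, x i i 0 = 0) :
  let i1 := idx1 hn in let i2 := idx2 hn in let i3 := idx3 hn in
  x i1 i2 0 + x i2 i3 0 + x i3 i1 0 = x i2 i1 0 + x i3 i2 0 + x i1 i3 0.
Proof.
move=> i1 i2 i3.
have [f_sum0|f_sum_neq0] := eqVneq (\sum_l f l 0) 0.
  have := solutions_cocycle hoff hirr hker hx hxii f_sum0 i1 i2 i3.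
  have := solutions_cocycle hoff hirr hker hx hxii f_sum0 i1 i3 i2.
  lra.
apply: (mulfI f_sum_neq0).
have := solution_skew hsym hx i1 i2; have := solution_skew hsym hx i2 i3.
have := solution_skew hsym hx i3 i1.
rewrite !mulrBr !mulrDr; lra.
Qed.
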